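(* Let $n>k\geq1$, $r=n-k$, and let $h,d$ be integers with $2\leq h\leq n-k$, $k<d\leq n-h$, $(d-k)\mid h$ and $(\frac{h}{d-k}+1)\mid 2^n$. Put $\delta=d-k$, $N=h/\delta$ (so $N=2^w-1$ for some integer $w\geq1$) and $\ell=2^n$. Let $F$ be a finite field with $|F|>2n$ and $\lambda_{j,0},\lambda_{j,1}$, $j\in[n]$, be $2n$ distinct elements of $F$, and let $\mathcal{C}$ be the (Hadamard MSR) code of all $(\bm c_1,\ldots,\bm c_n)$, $\bm c_j=(c_{j,0},\ldots,c_{j,\ell-1})\in F^\ell$, with $\sum_{j\in[n]}\lambda_{j,a_j}^{t-1}c_{j,a}=0$ for all $a\in[0,\ell-1]$, $t\in[r]$. Let $\mathcal{H}\subseteq[n]$ with $|\mathcal{H}|=h$ be the set of failed nodes and $\mathcal{R}\subseteq[n]\setminus\mathcal{H}$ with $|\mathcal{R}|=d$ the helper nodes. Partition $\mathcal{H}$ into disjoint sets $P_1,\ldots,P_N$ of size $\delta$, pick $m_i\in P_i$ for each $i\in[N]$, let $M=(m_1,\ldots,m_N)$, and let $V_0\subseteq\mathbb{F}_2^N$ be the binary Hamming code of length $N$ (dimension $N-w$, minimum distance $3$). Then every codeword's $\bm c_j$, $j\in\mathcal{H}$, can be recovered from the symbols $$\Big\{\sum_{v\in\{0,1\}}c_{j,\,a(P_i,a|_{P_i}\oplus v\bm 1_\delta)}:\ a\in[0,\ell-1]\text{ with }a|_M\in V_0,\ i\in[N]\Big\}$$ downloaded from each helper node $j\in\mathcal{R}$;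 this amounts to $\frac{h\ell}{d-k+h}$ symbols per helper node and total repair bandwidth $\frac{dh\ell}{d-k+h}$, achieving the cut-set bound. In particular $\mathcal{C}$ has the $(h,d)$-optimal repair property.
   Context: Each $a\in[0,2^n-1]$ is identified with its binary expansion $(a_1,\ldots,a_n)\in\{0,1\}^n$, $a=\sum_i a_i2^{i-1}$. For $\mathcal{X}\subseteq[n]$, $a|_{\mathcal{X}}$ is the vector of bits $(a_x)_{x\in\mathcal{X}}$ (for $M=(m_1,\ldots,m_N)$, $a|_M=(a_{m_1},\ldots,a_{m_N})\in\mathbb{F}_2^N$), and $a(\mathcal{X},\bm v)$ is the integer whose bits on $\mathcal{X}$ equal $\bm v$ and whose other bits equal those of $a$; $\oplus$ is bitwise addition mod 2 and $\bm 1_\delta$ is the all-one vector of length $\delta$. The binary Hamming code of length $N=2^w-1$ is the kernel of the $w\times N$ binary matrix whose columns are all nonzero vectors of $\mathbb{F}_2^w$. The cut-set bound for repairing $h$ nodes from $d$ helpers in an $(n,k,\ell)$ MDS array code is that each helper must send at least $\frac{h\ell}{d-k+h}$ symbols; the $(h,d)$-optimal repair property means that for every $h$-set $\mathcal{H}$ and every $d$-set $\mathcal{R}\subseteq[n]\setminus\mathcal{H}$ the failed nodes can be recovered with each helper sending exactly $\frac{h\ell}{d-k+h}$ symbols computed from its own content. *)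

From mathcomp Require Import all_boot all_algebra.
Set Implicit Arguments. Unset Strict Implicit. Unset Printing Implicit Defensive.
Import GRing.Theory.
Local Open Scope ring_scope.

(* Coordinate indices a in [0, 2^n - 1] are represented directly by their
   binary expansions (a_1,...,a_n), i.e. by elements of {ffun 'I_n -> bool};
   bit a_{j+1} is  a j  for j : 'I_n. *)

(* w such that N = 2^w - 1 (when N+1 is a power of 2). *)
Definition hamming_w (N : nat) : nat := trunc_log 2 N.+1.

(* Binary Hamming code of length N: kernel (over F_2, with xor as addition)
   of the w x N parity-check matrix whose column i (i = 0..N-1) is the binary
   expansion of i+1, i.e. the columns are all nonzero vectors of F_2^w. *)
Definition hamming_code (N : nat) (v : 'I_N -> bool) : bool :=
  [forall s : 'I_(hamming_w N),
     ~~ \big[addb/false]_(i < N) (v i && odd (i.+1 %/ 2 ^ s))].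

(* a(X, a|_X (+) 1_{|X|}) : flip the bits of a on X *)
Definition flip (n : nat) (a : {ffun 'I_n -> bool}) (X : {set 'I_n})
  : {ffun 'I_n -> bool} := [ffun j => a j (+) (j \in X)].

(* Hadamard MSR code: c j a = c_{j,a}; parity checks for t = 1..r
   (exponents 0..r-1), r = n - k. *)
Definition in_hadamard_code (n k : nat) (F : fieldType)
  (lam : 'I_n -> bool -> F) (c : 'I_n -> {ffun 'I_n -> bool} -> F) : Prop :=
  forall (a : {ffun 'I_n -> bool}) (t : 'I_(n - k)),
    \sum_(j < n) (lam j (a j)) ^+ t * c j a = 0.

From mathcomp Require Import all_boot all_algebra zify.
Set Implicit Arguments.
Unset Strict Implicit.
Unset Printing Implicit Defensive.
Import GRing.Theory.
Local Open Scope ring_scope.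

(* Fix i and an index a with a|_M in the Hamming code V_0, and let a' be a with
   its bits on P_i flipped.  Outside P_i, a and a' agree, so the sum of the
   parity checks at a and at a' is a Vandermonde system in the 2n distinct
   points lam_{j,b}: its unknowns are c_{j,a} and c_{j,a'} for j in P_i and
   c_{j,a} + c_{j,a'} for the other j, the latter being downloaded from the d
   helpers.  That leaves 2(d-k) + (n-(d-k)-d) = n-k unknowns for the n-k
   checks, so the system determines them all.  As the Hamming code is perfect
   of minimum distance 3, every b in F_2^N either lies in V_0 or becomes a
   codeword after toggling a unique coordinate i; hence every a is either such
   an index or the flip a' of one on a unique P_i, which both recovers every
   c_{j,a}, j in H, and counts the indices a with a|_M in V_0: there are
   2^n / (N+1) of them. *)

Lemma vanishing_moments_eq0 (F : fieldType) (T : finType) (mu : T -> F)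
    (S : {set T}) (r : nat) (y : T -> F) :
  {in S &, injective mu} -> (#|S| <= r)%N ->
  (forall p, p \notin S -> y p = 0) ->
  (forall t, (t < r)%N -> \sum_p mu p ^+ t * y p = 0) -> forall p, y p = 0.
Proof.
move=> muI leSr yS ym p0; have [p0S|] := boolP (p0 \in S); last exact: yS.
pose q := \prod_(z <- [seq mu x | x in S :\ p0]) ('X - z%:P).
have size_q : (size q <= r)%N.
  by rewrite size_prod_XsubC size_map -cardE (cardsD1 p0 S) p0S in leSr *.
have q_root p : p \in S :\ p0 -> root q (mu p).
  by move=> pS; rewrite root_prod_XsubC image_f.
have sum_q : \sum_p q.[mu p] * y p = 0.
  under eq_bigr => p _ do rewrite horner_coef big_distrl.
  rewrite exchange_big big1 // => t _ /=.
  under eq_bigr => p _ do rewrite -mulrA.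
  by rewrite -big_distrr /= ym ?mulr0 // (leq_trans (ltn_ord t) size_q).
move: sum_q; rewrite (bigD1 p0) //= big1 ?addr0 => [|p pp0]; last first.
  have [pS|] := boolP (p \in S); last by move/yS->; rewrite mulr0.
  by rewrite (rootP (q_root p _)) ?mul0r // in_setD1 pp0.
move/eqP; rewrite mulf_eq0 => /orP[|/eqP //].
rewrite -/(root q _) root_prod_XsubC => /imageP[x].
by rewrite in_setD1 => /andP[/eqP xp0 xS] /muI -/(_ p0S xS) /esym.
Qed.

Local Open Scope nat_scope.

Lemma binary_expansion (w x : nat) :
  x < 2 ^ w -> x = \sum_(s < w) odd (x %/ 2 ^ s) * 2 ^ s.
Proof.
elim: w x => [|w IHw] x ltx; first by rewrite big_ord0; case: x ltx.
have ltx2 : x./2 < 2 ^ w by rewrite -divn2 ltn_divLR // mulnC -expnS.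
rewrite big_ord_recl expn0 divn1 muln1.
under eq_bigr => s _ do rewrite /bump /= ?add1n expnS divnMA (mulnC 2) mulnA.
by rewrite -big_distrl /= divn2 -(IHw _ ltx2) muln2 odd_double_half.
Qed.

Section HammingCode.

Variable N : nat.
Local Notation w := (hamming_w N).

Definition hamming_col (i : 'I_N) : {ffun 'I_w -> bool} :=
  [ffun s : 'I_w => odd (i.+1 %/ 2 ^ s)].

Definition syndrome (b : 'I_N -> bool) : {ffun 'I_w -> bool} :=
  [ffun s => \big[addb/false]_(i < N) (b i && hamming_col i s)].

Definition toggle (b : 'I_N -> bool) (i : 'I_N) : 'I_N -> bool :=
  fun i0 => b i0 (+) (i0 == i).

Lemma eq_hamming_code (b b' : 'I_N -> bool) :
  b =1 b' -> hamming_code b = hamming_code b'.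
Proof.
by move=> eq_b; apply: eq_forallb => s; under eq_bigr => i _ do rewrite eq_b.
Qed.

Lemma syndromeE b s :
  syndrome b s = \big[addb/false]_(i < N) (b i && odd (i.+1 %/ 2 ^ s)).
Proof. by rewrite ffunE; apply: eq_bigr => i _; rewrite ffunE. Qed.

Lemma hamming_codeE b : hamming_code b = (syndrome b == [ffun=> false]).
Proof.
apply/forallP/eqP => [b0|syn0 s]; last by rewrite -syndromeE syn0 ffunE.
by apply/ffunP => s; rewrite syndromeE ffunE; apply/negbTE.
Qed.

Lemma syndrome_toggle b i s :
  syndrome (toggle b i) s = syndrome b s (+) hamming_col i s.
Proof.
rewrite [syndrome _ s]ffunE [syndrome b s]ffunE.
under eq_bigr => i0 _ do rewrite /toggle andb_addl.
rewrite big_split /=; congr addb.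
by rewrite (bigD1 i) //= eqxx big1 ?addbF // => i0 /negbTE->.
Qed.

Lemma hamming_code_toggle b i :
  hamming_code (toggle b i) = (syndrome b == hamming_col i).
Proof.
rewrite hamming_codeE; apply/eqP/eqP => [/ffunP syn0|syn_b]; apply/ffunP => s.
  move: (syn0 s); rewrite syndrome_toggle (ffunE (fun=> false)) => /negbT.
  by rewrite negb_add => /eqP.
by rewrite syndrome_toggle syn_b addbb (ffunE (fun=> false)).
Qed.

Hypothesis N1_exp2 : N.+1 = 2 ^ w.

Let lt_col (i : 'I_N) : i.+1 < 2 ^ w. Proof. by rewrite -N1_exp2 ltnS. Qed.

Lemma hamming_col_inj : injective hamming_col.
Proof.
move=> i i' /ffunP eq_col; apply/val_inj/eq_add_S.
rewrite (binary_expansion (lt_col i)) (binary_expansion (lt_col i')).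
by apply: eq_bigr => s _; move: (eq_col s); rewrite !ffunE => ->.
Qed.

Lemma hamming_col_neq0 i : hamming_col i != [ffun=> false].
Proof.
apply/eqP => /ffunP col0; move/binary_expansion: (lt_col i).
by rewrite big1 // => s _; move: (col0 s); rewrite !ffunE => ->.
Qed.

Lemma hamming_col_onto (v : {ffun 'I_w -> bool}) :
  v != [ffun=> false] -> exists i, v = hamming_col i.
Proof.
move=> v_neq0; pose S : {set {ffun 'I_w -> bool}} := [set~ [ffun=> false]].
have card_cols : #|[set hamming_col i | i : 'I_N]| = #|S|.
  rewrite card_imset; last exact: hamming_col_inj.
  by rewrite cardsC1 card_ffun card_bool !card_ord -N1_exp2.
have sub_cols : [set hamming_col i | i : 'I_N] \subset S.
  by apply/subsetP => _ /imsetP[i _ ->]; rewrite !inE hamming_col_neq0.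
have /imsetP[i _ ->] : v \in [set hamming_col i | i : 'I_N].
  by rewrite (subset_cardP card_cols sub_cols) !inE.
by exists i.
Qed.

Lemma hamming_code_or_toggle b :
  hamming_code b \/ exists i, hamming_code (toggle b i).
Proof.
rewrite hamming_codeE.
have [|/hamming_col_onto[i syn_b]] := eqVneq; first by left.
by right; exists i; rewrite hamming_code_toggle syn_b.
Qed.

Lemma hamming_toggle_inj b i i' :
  hamming_code (toggle b i) -> hamming_code (toggle b i') -> i = i'.
Proof.
by rewrite !hamming_code_toggle => /eqP-> /eqP/hamming_col_inj.
Qed.

Lemma hamming_code_toggleF b i :
  hamming_code b -> hamming_code (toggle b i) = false.
Proof.
rewrite hamming_codeE hamming_code_toggle => /eqP->.
by rewrite eq_sym (negbTE (hamming_col_neq0 i)).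
Qed.

End HammingCode.

Lemma flipK n (X : {set 'I_n}) : involutive (fun a => flip a X).
Proof. by move=> a; apply/ffunP => j; rewrite !ffunE addbK. Qed.

Section Flips.

Variables (n N : nat) (P : 'I_N -> {set 'I_n}) (m : 'I_N -> 'I_n).
Hypothesis P_disjoint : forall i i', i != i' -> [disjoint P i & P i'].
Hypothesis m_in_P : forall i, m i \in P i.

Local Notation restr a := (fun i => a (m i)).

Lemma hamming_code_flip a i :
  hamming_code (restr (flip a (P i))) = hamming_code (toggle (restr a) i).
Proof.
apply: eq_hamming_code => i0; rewrite ffunE; congr addb.
have [->|/P_disjoint] := eqVneq i0 i; first exact: m_in_P.
by rewrite disjoint_sym => /disjointFl->.
Qed.

Hypothesis N1_exp2 : (N.+1 = 2 ^ hamming_w N)%N.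

Lemma card_hamming_restr :
  #|[set a : {ffun 'I_n -> bool} | hamming_code (restr a)]| * N.+1 = 2 ^ n.
Proof.
set C := [set a | _].
pose phi (x : {ffun 'I_n -> bool} * option 'I_N) :=
  if x.2 is Some i then flip x.1 (P i) else x.1.
have phi_inj : {in setX C [set: option 'I_N] &, injective phi}.
  move=> [a [i|]] [a' [i'|]]; rewrite !inE /= !andbT /phi /= => Ca Ca' eq_phi.
  - have Ci : hamming_code (toggle (restr (flip a (P i))) i).
      by rewrite -hamming_code_flip flipK.
    have Ci' : hamming_code (toggle (restr (flip a (P i))) i').
      by rewrite -hamming_code_flip eq_phi flipK.
    have ii' := hamming_toggle_inj N1_exp2 Ci Ci'; subst i'.
    by rewrite -(flipK (P i) a) eq_phi flipK.
  - by move: Ca'; rewrite -eq_phi hamming_code_flip hamming_code_toggleF.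
  - by move: Ca; rewrite eq_phi hamming_code_flip hamming_code_toggleF.
  - by rewrite eq_phi.
have phi_onto : [set phi x | x in setX C [set: option 'I_N]] = setT.
  apply/setP => a; rewrite inE; apply/imsetP.
  have [Ca|[i Ci]] := hamming_code_or_toggle N1_exp2 (restr a).
    by exists (a, None); rewrite // !inE andbT.
  exists (flip a (P i), Some i); last by rewrite /phi /= flipK.
  by rewrite !inE andbT hamming_code_flip.
move: (card_in_imset phi_inj); rewrite phi_onto cardsX !cardsT card_option.
by rewrite card_ffun card_bool !card_ord => <-.
Qed.

End Flips.

Local Open Scope ring_scope.

Definition repair_download n (F : zmodType) N (R : {set 'I_n})
    (P : 'I_N -> {set 'I_n}) (m : 'I_N -> 'I_n)
    (c : 'I_n -> {ffun 'I_n -> bool} -> F) (j : 'I_n) (a : {ffun 'I_n -> bool})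
    (i : 'I_N) : F :=
  if (j \in R) && hamming_code (fun i0 => a (m i0))
  then c j a + c j (flip a (P i)) else 0.

Definition hadamard_codeb n k (F : fieldType) (lam : 'I_n -> bool -> F)
    (c : 'I_n -> {ffun 'I_n -> bool} -> F) : bool :=
  [forall a : {ffun 'I_n -> bool}, forall t : 'I_(n - k),
     \sum_(j < n) lam j (a j) ^+ t * c j a == 0].

Lemma hadamard_codebP n k (F : fieldType) (lam : 'I_n -> bool -> F) c :
  reflect (in_hadamard_code k lam c) (hadamard_codeb k lam c).
Proof.
apply: (iffP forallP) => [c0 a t|c0 a]; first by move/forallP/(_ t)/eqP: (c0 a).
by apply/forallP => t; apply/eqP/c0.
Qed.

Definition on_graph n (F : zmodType) (a : {ffun 'I_n -> bool}) (x : 'I_n -> F)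
    (p : 'I_n * bool) : F :=
  if a p.1 == p.2 then x p.1 else 0.

Lemma sum_on_graph n (F : ringType) (a : {ffun 'I_n -> bool}) (x : 'I_n -> F)
    (g : 'I_n -> bool -> F) :
  \sum_p g p.1 p.2 * on_graph a x p = \sum_j g j (a j) * x j.
Proof.
rewrite -(pair_bigA _ (fun j b => g j b * on_graph a x (j, b))) /=.
apply: eq_bigr => j _; rewrite big_bool /on_graph /=.
by case: (a j); rewrite /= ?mulr0 ?addr0 ?add0r.
Qed.

Section Repair.

Variables (n k d : nat) (F : fieldType) (lam : 'I_n -> bool -> F).
Variables (H R : {set 'I_n}) (N : nat).
Variables (P : 'I_N -> {set 'I_n}) (m : 'I_N -> 'I_n).
Hypothesis lam_inj : injective (fun p : 'I_n * bool => lam p.1 p.2).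
Hypothesis k_lt_d : (k < d)%N.
Hypothesis card_R : #|R| = d.
Hypothesis H_R_disjoint : [disjoint H & R].
Hypothesis card_P : forall i, #|P i| = (d - k)%N.
Hypothesis P_disjoint : forall i i', i != i' -> [disjoint P i & P i'].
Hypothesis cover_P : \bigcup_i P i = H.
Hypothesis m_in_P : forall i, m i \in P i.

Lemma P_notin_R i j : j \in P i -> j \notin R.
Proof.
move=> jP; apply/negbT/(disjointFr H_R_disjoint).
by rewrite -cover_P; apply/bigcupP; exists i.
Qed.

Lemma card_repair_support i (a : {ffun 'I_n -> bool}) :
  (#|setX (P i) [set: bool] :|: [set (j, a j) | j in ~: (P i :|: R)]|
     <= n - k)%N.
Proof.
apply: leq_trans (leq_card_setU _ _) _.
have := leq_imset_card (fun j => (j, a j)) (~: (P i :|: R)).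
have := cardsC (P i :|: R); have := cardsUI (P i) R.
have -> : P i :&: R = set0.
  apply/setP => j; rewrite !inE.
  by have [/P_notin_R/negbTE->|] := boolP (j \in P i).
rewrite cardsX cardsT card_bool card_P card_R cards0 card_ord.
set u := #|P i :|: R|; set v := #|~: _|; set s := #|imset _ _|; lia.
Qed.

Variable e : 'I_n -> {ffun 'I_n -> bool} -> F.
Hypothesis e_code : in_hadamard_code k lam e.
Hypothesis e_download0 : forall j a i, repair_download R P m e j a i = 0.

Lemma repair_system_eq0 i (a : {ffun 'I_n -> bool}) :
  hamming_code (fun i0 => a (m i0)) ->
  (forall j, j \in P i -> e j a = 0 /\ e j (flip a (P i)) = 0) /\
  (forall j, j \notin P i -> j \notin R -> e j a + e j (flip a (P i)) = 0).
Proof.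
move=> Ca; set a' := flip a (P i).
have a'E j : a' j = a j (+) (j \in P i) by rewrite ffunE.
pose y p := on_graph a (e^~ a) p + on_graph a' (e^~ a') p.
have yE j b : y (j, b) =
    (if a j == b then e j a else 0) + (if a' j == b then e j a' else 0).
  by rewrite /y /= /on_graph.
have y0 : forall p, y p = 0.
  apply: (vanishing_moments_eq0 (in2W lam_inj) (card_repair_support i a)).
    move=> [j b]; rewrite !inE /= andbT => /norP[jP].
    rewrite yE a'E (negbTE jP) addbF.
    have [<-|_] := eqVneq (a j) b; last by rewrite addr0.
    have [jR _|jR] := boolP (j \in R).
      by move: (e_download0 j a i); rewrite /repair_download jR Ca.
    by case/negP; apply/imsetP; exists j; rewrite // !inE negb_or jP.
  move=> t ltt; rewrite /y /=.
  under eq_bigr => p _ do rewrite mulrDr.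
  rewrite big_split /= !(sum_on_graph _ _ (fun j b => lam j b ^+ t)).
  by rewrite (e_code a (Ordinal ltt)) (e_code a' (Ordinal ltt)) addr0.
split=> [j jP|j jP _].
  move: (y0 (j, a j)) (y0 (j, ~~ a j)); rewrite !yE a'E jP.
  by case: (a j); rewrite /= ?addr0 ?add0r.
by move: (y0 (j, a j)); rewrite yE a'E (negbTE jP) addbF eqxx.
Qed.

Hypothesis N1_exp2 : (N.+1 = 2 ^ hamming_w N)%N.

Lemma repair_kernel j a : j \in H -> e j a = 0.
Proof.
rewrite -cover_P => /bigcupP[i0 _ jP0].
have [Ca|[i Ci]] := hamming_code_or_toggle N1_exp2 (fun i0 => a (m i0)).
  by have [/(_ j jP0)[]] := repair_system_eq0 i0 Ca.
rewrite -(hamming_code_flip P_disjoint m_in_P) in Ci.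
have [/(_ j jP0)[e0 _] _] := repair_system_eq0 i0 Ci.
have [ePi ePi'] := repair_system_eq0 i Ci; rewrite flipK in ePi ePi'.
have [/ePi[]//|jPi] := boolP (j \in P i).
by move: (ePi' j jPi (P_notin_R jP0)); rewrite e0 add0r.
Qed.

End Repair.

Definition consistent_codeword n k (F : fieldType) (lam : 'I_n -> bool -> F)
    (R : {set 'I_n}) N (P : 'I_N -> {set 'I_n}) (m : 'I_N -> 'I_n)
    (f : 'I_n -> {ffun 'I_n -> bool} -> 'I_N -> F)
    (c : 'I_n -> {ffun 'I_n -> bool} -> F) : bool :=
  hadamard_codeb k lam c &&
  [forall j, forall a, forall i, f j a i == repair_download R P m c j a i].

(* Recovery by exhaustive search of the finite code instead of the explicit
   linear decoding of the paper: any codeword with the downloads f will do. *)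
Definition repair_decoder n k (F : finFieldType) (lam : 'I_n -> bool -> F)
    (R : {set 'I_n}) N (P : 'I_N -> {set 'I_n}) (m : 'I_N -> 'I_n)
    (f : 'I_n -> {ffun 'I_n -> bool} -> 'I_N -> F) (j : 'I_n)
    (a : {ffun 'I_n -> bool}) : F :=
  if [pick c : {ffun 'I_n -> {ffun {ffun 'I_n -> bool} -> F}} |
      consistent_codeword k lam R P m f (fun j a => c j a)] is Some c
  then c j a else 0.

Lemma repair_decoderP n k (F : finFieldType) (lam : 'I_n -> bool -> F)
    (H R : {set 'I_n}) N (P : 'I_N -> {set 'I_n}) (m : 'I_N -> 'I_n)
    (c : 'I_n -> {ffun 'I_n -> bool} -> F) :
  (forall e, in_hadamard_code k lam e ->
     (forall j a i, repair_download R P m e j a i = 0) ->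
     forall j a, j \in H -> e j a = 0) ->
  in_hadamard_code k lam c -> forall j a, j \in H ->
  repair_decoder k lam R P m (repair_download R P m c) j a = c j a.
Proof.
move=> kernel_H c_code j a jH; rewrite /repair_decoder.
case: pickP => [c' /andP[/hadamard_codebP c'_code /forallP c'_f]|no_c'].
  apply/eqP; rewrite eq_sym -subr_eq0; apply/eqP.
  apply: (kernel_H (fun j a => c j a - c' j a)) => // [b t|j' b i].
    under eq_bigr => j0 _ do rewrite mulrBr.
    by rewrite sumrB c_code c'_code subr0.
  move/forallP/(_ b)/forallP/(_ i)/eqP: (c'_f j'); rewrite /repair_download.
  by case: ifP => // _ eq_f; rewrite addrACA -opprD eq_f subrr.
move/negP: (no_c' [ffun j => [ffun b => c j b]]); case; apply/andP; split.
  apply/hadamard_codebP => b t; rewrite -[RHS](c_code b t).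
  by apply: eq_bigr => j0 _; rewrite !ffunE.
apply/forallP => j'; apply/forallP => b; apply/forallP => i.
by rewrite /repair_download !ffunE.
Qed.

Theorem theorem4 (n k h d : nat) (F : finFieldType) (lam : 'I_n -> bool -> F)
  (H R : {set 'I_n}) (P : 'I_(h %/ (d - k)) -> {set 'I_n})
  (m : 'I_(h %/ (d - k)) -> 'I_n) :
  (1 <= k < n)%N ->
  (2 <= h <= n - k)%N ->
  (k < d <= n - h)%N ->
  (d - k %| h)%N ->
  ((h %/ (d - k)).+1 %| 2 ^ n)%N ->
  (2 * n < #|F|)%N ->
  injective (fun p : 'I_n * bool => lam p.1 p.2) ->
  #|H| = h -> #|R| = d -> [disjoint H & R] ->
  (forall i, #|P i| = (d - k)%N) ->
  (forall i i', i != i' -> [disjoint P i & P i']) ->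
  \bigcup_i P i = H ->
  (forall i, m i \in P i) ->
  (exists rec : ('I_n -> {ffun 'I_n -> bool} -> 'I_(h %/ (d - k)) -> F) ->
                'I_n -> {ffun 'I_n -> bool} -> F,
     forall c : 'I_n -> {ffun 'I_n -> bool} -> F,
       in_hadamard_code k lam c ->
       forall j, j \in H -> forall a,
         rec (fun j' a' i =>
                if (j' \in R) && hamming_code (fun i0 => a' (m i0))
                then c j' a' + c j' (flip a' (P i)) else 0) j a = c j a)
  /\ (#|[set a : {ffun 'I_n -> bool} | hamming_code (fun i => a (m i))]|
        * (h %/ (d - k)) * (d - k + h) = h * 2 ^ n)%N.
Proof.
(* The bounds on k, h, d and |F| and the value of |H| are not needed. *)
move=> _ _ /andP[k_lt_d _] dvd_h N1_dvd _ lam_inj _ card_R H_R_disjoint card_P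
  P_disjoint cover_P m_in_P.
have N1_exp2 : ((h %/ (d - k)).+1 = 2 ^ hamming_w (h %/ (d - k)))%N.
  case/(dvdn_pfactor _ _ (isT : prime 2)): N1_dvd => w _ N1_eq.
  by rewrite /hamming_w N1_eq trunc_expnK.
split.
  exists (repair_decoder k lam R P m) => c c_code j jH a.
  apply: (repair_decoderP _ c_code _ jH) => e e_code e0 j' a'.
  exact: (repair_kernel lam_inj k_lt_d card_R H_R_disjoint card_P P_disjoint
    cover_P m_in_P e_code e0 N1_exp2).
have := card_hamming_restr P_disjoint m_in_P N1_exp2; have := divnK dvd_h.
set C := #|_|; set N := (h %/ (d - k))%N; set delta := (d - k)%N => h_eq C_eq.
by rewrite -{}C_eq -{}h_eq; clearbody C N delta; nia.
Qed.
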